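(* For sufficiently large $m$, let $G=\mathbb{Z}_2^m\times\mathbb{Z}_4$. Let $t$ be an integer with $3\leq t\leq 0.001f(G)$ and $|I(G)|+2t\equiv 0\pmod 3$, and let $M$ be the multiset consisting of $f(G)-t$ copies of $2$ and $\frac13(|I(G)|+2t)$ copies of $3$. Then $G\setminus\{0\}$ has a zero-sum $M$-partition.
   Context: $I(G)$ is the set of elements of order $2$ in $G$, and $f(G)=(|G|-|I(G)|-1)/2$. A zero-sum $M$-partition of a set $S\subseteq G$ is a partition of $S$ into sets each summing to $0$, such that the multiset of part sizes equals $M$. *)

From HB Require Import structures.
From mathcomp Require Import all_boot all_order all_algebra.
Set Implicit Arguments. Unset Strict Implicit. Unset Printing Implicit Defensive.
Import GRing.Theory.
Local Open Scope ring_scope.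

Definition invols (G : finZmodType) : {set G} :=
  [set x : G | (x != 0) && (x + x == 0)].

(* f(G) = (|G| - |I(G)| - 1)/2; the numerator is always even. *)
Definition fG (G : finZmodType) : nat :=
  ((#|G| - #|invols G| - 1) %/ 2)%N.

(* A zero-sum M-partition of S: a partition of S into (nonempty) blocks,
   each summing to 0, whose multiset of block sizes is M (given as a seq,
   compared up to permutation). *)
Definition zero_sum_partition (G : finZmodType) (S : {set G}) (M : seq nat) :=
  exists P : {set {set G}},
    [/\ partition P S,
        (forall B, B \in P -> \sum_(x in B) x = 0) &
        perm_eq (map (fun B : {set G} => #|B|) (enum P)) M].

Definition Gm (m : nat) := ('rV['Z_2]_m * 'Z_4)%type.
HB.instance Definition _ m := GRing.Zmodule.on (Gm m).
HB.instance Definition _ m := Finite.on (Gm m).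

(* Write G = Z_2^m x Z_4, m = k + 2n with k = 1 or 2 according to the parity
   of m, as Q x U with Q = Z_2^k x Z_4 and U = Z_2^n x Z_2^n, on which
   w (a, b) = (b, a + b) is an additive map of order 3 fixing only 0.  The
   blocks of the partition are the cycles of a map on Q x U: on Q x 0 it is a
   fixed pattern of zero-sum pairs and triples of Q; over each w-orbit
   {u, w u, w^2 u} every involution q of Q starts a triple (q, u), (q', w u),
   (q'', w^2 u) with q + q' + q'' = 0, and every other q is paired with -q.
   Finally, for u in a w-stable set Gamma, the elements 0, o, -o for a fixed o
   of order 4 are rotated along the orbit instead: each w-orbit in Gamma turns
   three pairs and one triple into three triples, so |Gamma| lowers the number
   of pairs in steps of 3, down to the f(G) - t required. *)

From HB Require Import structures.
From mathcomp Require Import all_boot all_order all_algebra zify.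
Set Implicit Arguments. Unset Strict Implicit. Unset Printing Implicit Defensive.
Import GRing.Theory.
Local Open Scope ring_scope.

Lemma morphD_0 (G H : zmodType) (f : G -> H) : {morph f : x y / x + y} -> f 0 = 0.
Proof. by move=> fD; apply: (addrI (f 0)); rewrite -fD !addr0. Qed.

Section ZeroSumPartition.
Variable G : finZmodType.
Implicit Types (A B : {set G}) (P : {set {set G}}) (M : seq nat).

Lemma zero_sum_partitionU A B MA MB :
  [disjoint A & B] -> zero_sum_partition A MA -> zero_sum_partition B MB ->
  zero_sum_partition (A :|: B) (MA ++ MB).
Proof.
move=> dAB [PA [pA sA eA]] [PB [pB sB eB]].
case/and3P: pA => /eqP covA tA nA; case/and3P: pB => /eqP covB tB nB.
have dP : [disjoint PA & PB].
  apply/pred0P => C /=; apply/andP => -[CA CB].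
  have /set0Pn [x xC] : C != set0 by apply: contraNneq nA => <-.
  have xA : x \in A by rewrite -covA; apply/bigcupP; exists C.
  have xB : x \in B by rewrite -covB; apply/bigcupP; exists C.
  by move/pred0P/(_ x): dAB; rewrite /= xA xB.
exists (PA :|: PB); split.
- rewrite /partition /cover bigcup_setU -/(cover PA) -/(cover PB) covA covB eqxx.
  rewrite trivIsetU ?covA ?covB //=.
  by rewrite !inE negb_or nA nB.
- by move=> C /setUP [/sA | /sB].
- have eP : perm_eq (enum (PA :|: PB)) (enum PA ++ enum PB).
    apply: uniq_perm; rewrite ?enum_uniq ?cat_uniq ?enum_uniq ?andbT //=.
      apply/hasPn => C; rewrite !mem_enum => CB.
      by rewrite (disjointFl dP) // disjoint_sym.
    by move=> C; rewrite mem_cat !mem_enum inE.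
  by rewrite (perm_trans (perm_map _ eP)) // map_cat perm_cat.
Qed.

Lemma zero_sum_partition_nseq P A k :
  partition P A -> {in P, forall B, \sum_(x in B) x = 0} ->
  {in P, forall B, #|B| = k} -> zero_sum_partition A (nseq #|P| k).
Proof.
move=> pP sP cP; exists P; split=> //.
suff -> : map (fun B : {set G} => #|B|) (enum P) = nseq #|P| k by [].
rewrite cardE -(size_map (fun B : {set G} => #|B|)); apply/all_pred1P/allP.
by move=> b /mapP [B]; rewrite mem_enum => /cP Bk ->; rewrite /= Bk.
Qed.

Lemma zero_sum_partition_imset (H : finZmodType) (f : G -> H) S M :
  {morph f : x y / x + y} -> injective f ->
  zero_sum_partition S M -> zero_sum_partition (f @: S) M.
Proof.
move=> fD finj [P [pP sP eP]].
have f0 := morphD_0 fD.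
exists [set f @: (B : {set G}) | B in P]; split; first by rewrite imset_partition.
  move=> _ /imsetP [B BP ->]; rewrite big_imset /=; last by move=> x y _ _ /finj.
  by rewrite -(big_morph f fD f0) sP.
have eQ : perm_eq (enum [set f @: (B : {set G}) | B in P])
                  (map (fun B : {set G} => f @: B) (enum P)).
  apply: uniq_perm; rewrite ?enum_uniq ?(map_inj_uniq (imset_inj finj)) ?enum_uniq //.
  move=> C; rewrite mem_enum; apply/imsetP/mapP => -[B BP ->];
    by exists B; rewrite ?mem_enum in BP *.
rewrite (perm_trans (perm_map _ eQ)) // -map_comp.
by rewrite (@eq_map _ _ _ (fun B : {set G} => #|B|)) // => B /=; rewrite card_imset.
Qed.

End ZeroSumPartition.

Lemma zero_sum_partition_iso (G H : finZmodType) (f : G -> H) M :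
  {morph f : x y / x + y} -> injective f -> #|G| = #|H| ->
  zero_sum_partition (~: [set 0] : {set G}) M ->
  zero_sum_partition (~: [set 0] : {set H}) M.
Proof.
move=> fD finj cGH /(zero_sum_partition_imset fD finj).
have f0 := morphD_0 fD.
suff -> : f @: (~: [set 0]) = ~: [set 0] by [].
apply/eqP; rewrite eqEcard card_imset // !cardsC1 cGH leqnn andbT.
apply/subsetP => y /imsetP [x]; rewrite !inE => x0 ->.
by apply: contra x0 => /eqP; rewrite -f0 => /finj ->.
Qed.

Section Orbit3.
Variables (T : finType) (pi : T -> T).
Implicit Types x : T.

Definition orbit3 x : {set T} := [set x; pi x; pi (pi x)].

Lemma orbit3_id x : x \in orbit3 x.
Proof. by rewrite !inE eqxx. Qed.

Lemma orbit3_pi x :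
  (pi (pi x) == x) || (pi (pi (pi x)) == x) -> orbit3 (pi x) = orbit3 x.
Proof.
by case/orP => /eqP pi_x; apply/setP => y; rewrite !inE pi_x; do !case: (_ == _).
Qed.

Lemma orbit3_2 x : pi (pi x) = x -> orbit3 x = [set x; pi x].
Proof. by move=> pi2x; rewrite /orbit3 pi2x setUAC setUid. Qed.

Lemma orbit3_3_neq x :
  pi (pi x) != x -> pi (pi (pi x)) = x -> (pi x != x) && (pi (pi x) != pi x).
Proof.
move=> pi2x pi3x; apply/andP; split.
  by apply: contra pi2x => /eqP e; rewrite !e.
by apply: contra pi2x => /eqP e; rewrite -[X in _ == X]pi3x !e.
Qed.

Lemma card_orbit3_2 x : pi x != x -> pi (pi x) = x -> #|orbit3 x| = 2%N.
Proof. by move=> pix /orbit3_2 ->; rewrite cards2 eq_sym pix. Qed.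

Lemma card_orbit3_3 x : pi (pi x) != x -> pi (pi (pi x)) = x -> #|orbit3 x| = 3%N.
Proof.
move=> pi2x /(orbit3_3_neq pi2x) /andP [pix pi21].
by rewrite /orbit3 -setUA cardsU1 cards2 !inE negb_or eq_sym pix eq_sym pi2x eq_sym pi21.
Qed.

End Orbit3.

Section ZeroSumCycles.
Variables (G : finZmodType) (pi : G -> G).
Implicit Types (x : G) (S : {set G}).

Definition zero_sum_2cycle x := [&& pi x != x, pi (pi x) == x & x + pi x == 0].
Definition zero_sum_3cycle x :=
  [&& pi (pi x) != x, pi (pi (pi x)) == x & x + pi x + pi (pi x) == 0].
Definition zero_sum_cycles S :=
  {in S, forall x, (pi x \in S) && (zero_sum_2cycle x || zero_sum_3cycle x)}.

Lemma zero_sum_cycle_orbit3_pi x :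
  zero_sum_2cycle x || zero_sum_3cycle x -> orbit3 pi (pi x) = orbit3 pi x.
Proof. by move=> zx; apply: orbit3_pi; case/orP: zx => /and3P [_ -> _]; rewrite ?orbT. Qed.

Lemma sum_orbit3 x :
  zero_sum_2cycle x || zero_sum_3cycle x -> \sum_(y in orbit3 pi x) y = 0.
Proof.
case/orP => /and3P [pi2x /eqP pi_x /eqP sx].
  by rewrite orbit3_2 // big_setU1 ?big_set1 // inE eq_sym.
case/andP: (orbit3_3_neq pi2x pi_x) => pix pi21.
rewrite /orbit3 -setUA big_setU1; last by rewrite !inE negb_or eq_sym pix eq_sym pi2x.
by rewrite big_setU1 ?big_set1 /= ?addrA // inE eq_sym.
Qed.

Lemma partition_orbit3 S : zero_sum_cycles S -> partition [set orbit3 pi x | x in S] S.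
Proof.
move=> zS.
have orbitS x : x \in S -> orbit3 pi x \subset S.
  move=> xS; have /andP [pxS _] := zS x xS; have /andP [ppxS _] := zS _ pxS.
  by apply/subsetP => y; rewrite !inE -orbA => /or3P [] /eqP ->.
have orbit3_eq x y : x \in S -> y \in orbit3 pi x -> orbit3 pi y = orbit3 pi x.
  move=> xS; have /andP [pxS zx] := zS x xS; have /andP [_ zpx] := zS _ pxS.
  rewrite !inE -orbA => /or3P [] /eqP -> //; first by rewrite zero_sum_cycle_orbit3_pi.
  by rewrite !zero_sum_cycle_orbit3_pi.
apply/and3P; split.
- apply/eqP/setP => y; apply/bigcupP/idP => [[_ /imsetP [x xS ->]]|yS].
    by apply/subsetP; apply: orbitS.
  by exists (orbit3 pi y); [apply: imset_f | apply: orbit3_id].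
- apply/trivIsetP => _ _ /imsetP [x xS ->] /imsetP [y yS ->] neq.
  apply/pred0P => z /=; apply/andP => -[zx zy].
  by move: neq; rewrite -(orbit3_eq x z xS zx) -(orbit3_eq y z yS zy) eqxx.
- by apply/imsetP => -[x _] /setP /(_ x); rewrite orbit3_id inE.
Qed.

Lemma zero_sum_partition_orbit3 S k : (0 < k)%N -> zero_sum_cycles S ->
  {in S, forall x, #|orbit3 pi x| = k} -> zero_sum_partition S (nseq (#|S| %/ k) k).
Proof.
move=> k_gt0 zS cS; have pS := partition_orbit3 zS.
have cP : {in [set orbit3 pi x | x in S], forall B : {set G}, #|B| = k}.
  by move=> _ /imsetP [x xS ->]; apply: cS.
rewrite (card_uniform_partition cP pS) mulnK //.
apply: zero_sum_partition_nseq pS _ cP => _ /imsetP [x xS ->].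
by case/andP: (zS x xS) => _ /sum_orbit3.
Qed.

Lemma zero_sum_partition_cycles S a b : zero_sum_cycles S ->
  #|[set x in S | pi (pi x) == x]| = (2 * a)%N -> #|S| = (2 * a + 3 * b)%N ->
  zero_sum_partition S (nseq a 2%N ++ nseq b 3%N).
Proof.
move=> zS; set S2 := [set x | pi (pi x) == x].
have -> : [set x in S | pi (pi x) == x] = S :&: S2 by apply/setP => x; rewrite !inE andbC.
move=> cS2 cS; rewrite -(setID S S2).
have cS3 : #|S :\: S2| = (3 * b)%N.
  by apply/eqP; rewrite -(eqn_add2l #|S :&: S2|) cardsID cS2 cS.
have dS : [disjoint S :&: S2 & S :\: S2].
  by rewrite -setI_eq0 setDE setIACA setICr setI0.
have zS2 : zero_sum_cycles (S :&: S2).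
  move=> x; rewrite !inE => /andP [xS pi2x]; have /andP [pxS zx] := zS x xS.
  by rewrite pxS (eqP pi2x) eqxx.
have zS3 : zero_sum_cycles (S :\: S2).
  move=> x; rewrite !inE => /andP [pi2x xS]; have /andP [pxS zx] := zS x xS.
  case/orP: (zx) => [/and3P [_ /eqP e _] | /and3P [_ /eqP pi3x _]].
    by rewrite e eqxx in pi2x.
  by case/andP: (orbit3_3_neq pi2x pi3x) => pix _; rewrite pxS pi3x eq_sym pix.
have c2 : {in S :&: S2, forall x, #|orbit3 pi x| = 2%N}.
  move=> x; rewrite !inE => /andP [xS pi2x]; have /andP [_] := zS x xS.
  case/orP => /and3P [pix _ _]; last by rewrite pi2x in pix.
  exact: card_orbit3_2 pix (eqP pi2x).
have c3 : {in S :\: S2, forall x, #|orbit3 pi x| = 3%N}.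
  move=> x; rewrite !inE => /andP [pi2x xS]; have /andP [_] := zS x xS.
  case/orP => /and3P [_ /eqP e _]; first by rewrite e eqxx in pi2x.
  exact: card_orbit3_3.
apply: zero_sum_partitionU => //.
  by have := zero_sum_partition_orbit3 (isT : 0 < 2)%N zS2 c2; rewrite cS2 mulKn.
by have := zero_sum_partition_orbit3 (isT : 0 < 3)%N zS3 c3; rewrite cS3 mulKn.
Qed.

End ZeroSumCycles.

Section OrderThreeMap.
Variables (T : finType) (w : T -> T) (z : T).
Hypothesis w3 : forall u, w (w (w u)) = u.
Hypothesis wz : w z = z.
Hypothesis w_fixfree : forall u, u != z -> w u != u.

Lemma w2_neq u : u != z -> w (w u) != u.
Proof. by move=> uz; apply: contra (w_fixfree uz) => /eqP e; rewrite -{2}(w3 u) e. Qed.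

Lemma w_neq_z u : u != z -> w u != z.
Proof. by move=> uz; apply: contra uz => /eqP e; rewrite -(w3 u) e !wz. Qed.

Lemma orbit3_w u : orbit3 w (w u) = orbit3 w u.
Proof. by rewrite orbit3_pi // w3 eqxx orbT. Qed.

Lemma exists_orbit_labelling :
  exists c : T -> 'I_3, forall u, u != z -> c (w u) = c u + 1.
Proof.
pose rep u := odflt z [pick v in orbit3 w u].
have rep_w u : rep (w u) = rep u by rewrite /rep orbit3_w.
have rep_in u : rep u \in orbit3 w u.
  by rewrite /rep; case: pickP => [v // | /(_ u)]; rewrite orbit3_id.
exists (fun u => if u == rep u then 0 else if u == w (rep u) then 1 else 2).
move=> u uz; rewrite rep_w.
have wu : (u == w u) = false by rewrite eq_sym (negPf (w_fixfree uz)).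
have w2u : (u == w (w u)) = false by rewrite eq_sym (negPf (w2_neq uz)).
have w21 : (w u == w (w u)) = false by rewrite eq_sym (negPf (w_fixfree (w_neq_z uz))).
have w12 : (w u == u) = false by rewrite (negPf (w_fixfree uz)).
have := rep_in u; rewrite !inE -orbA => /or3P [] /eqP ->;
  by rewrite ?w3 ?eqxx ?wu ?w2u ?w21 ?w12; apply: val_inj.
Qed.

Lemma exists_stable_set s : (3 * s < #|T|)%N ->
  exists S : {set T}, [/\ z \notin S, forall u, (w u \in S) = (u \in S) & #|S| = (3 * s)%N].
Proof.
elim: s => [|s IH] lt_sT.
  by exists set0; rewrite cards0 muln0; split=> [|u|]; rewrite ?inE.
have [S [zS wS cS]] : exists S : {set T},
    [/\ z \notin S, forall u, (w u \in S) = (u \in S) & #|S| = (3 * s)%N].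
  by apply: IH; lia.
have /set0Pn [x] : ~: (z |: S) != set0.
  by rewrite -card_gt0; have := cardsC (z |: S); rewrite cardsU1 zS cS; lia.
rewrite !inE negb_or => /andP [xz xS].
have w_inj : injective w by apply: (can_inj (g := fun u => w (w u))).
have wwx := w_neq_z (w_neq_z xz).
exists (S :|: orbit3 w x); split.
- by rewrite !inE !negb_or zS !(eq_sym z) xz (w_neq_z xz) wwx.
- by move=> u; rewrite !inE wS -{1}(w3 x) !(inj_eq w_inj); do !case: (_ == _).
- rewrite cardsU cS (card_orbit3_3 (w2_neq xz) (w3 x)).
  suff -> : S :&: orbit3 w x = set0 by rewrite cards0; lia.
  apply/setP => y; rewrite !inE; apply/negP => /andP [yS].
  by rewrite -orbA => /or3P [] /eqP e; move: yS; rewrite e ?wS ?wS; apply/negP.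
Qed.

End OrderThreeMap.

Definition order_gt2 (G : finZmodType) := [set x : G | x + x != 0].

(* The product of two finZmodTypes gets no canonical finZmodType structure. *)
Definition zprod (Q U : finZmodType) := (Q * U)%type.
HB.instance Definition _ Q U := GRing.Zmodule.on (zprod Q U).
HB.instance Definition _ Q U := Finite.on (zprod Q U).

Section ProductConstruction.
Variables Q U : finZmodType.
Implicit Types (q : Q) (u : U).

Hypothesis U_addxx : forall u, u + u = 0.
Variable w : U -> U.
Hypothesis wD : {morph w : u v / u + v}.
Hypothesis w3 : forall u, w (w (w u)) = u.
Hypothesis wfix : forall u, w u = u -> u = 0.

Variable Gamma : {set U}.
Hypothesis Gamma0 : 0 \notin Gamma.
Hypothesis Gamma_w : forall u, (w u \in Gamma) = (u \in Gamma).

Variable N : U -> Q -> Q.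
Hypothesis N0 : forall u, N u 0 = 0.
Hypothesis N_invol : forall u q, u != 0 -> q + q = 0 -> N u q + N u q = 0.
Hypothesis N3 : forall u q, u != 0 -> q + q = 0 -> N (w (w u)) (N (w u) (N u q)) = q.
Hypothesis Nsum : forall u q, u != 0 -> q + q = 0 -> q + N u q + N (w u) (N u q) = 0.

Variable o : Q.
Hypothesis oo_neq0 : o + o != 0.

Variable pQ : Q -> Q.
Hypothesis pQ_cycles : zero_sum_cycles pQ (~: [set 0]).

Lemma w_neq0 u : u != 0 -> w u != 0.
Proof. exact: (@w_neq_z U w 0 w3 (morphD_0 wD)). Qed.

Lemma w_fixfree u : u != 0 -> w u != u.
Proof. by apply: contra => /eqP /wfix ->. Qed.

Lemma w_sum u : u + w u + w (w u) = 0.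
Proof. by apply: wfix; rewrite !wD w3 addrC addrA. Qed.

Definition o_orbit : {set Q} := [set 0; o; - o].

Definition rot_o q := if q == 0 then o else if q == o then - o else 0.

Lemma o_neq0 : o != 0.
Proof. by apply: contraNneq oo_neq0 => ->; rewrite addr0. Qed.

Lemma o_neqN : o != - o.
Proof. by apply: contraNneq oo_neq0 => e; rewrite {1}e addNr. Qed.

Lemma rot_o0 : rot_o 0 = o.
Proof. by rewrite /rot_o eqxx. Qed.

Lemma rot_oo : rot_o o = - o.
Proof. by rewrite /rot_o (negPf o_neq0) eqxx. Qed.

Lemma rot_oN : rot_o (- o) = 0.
Proof. by rewrite /rot_o oppr_eq0 (negPf o_neq0) eq_sym (negPf o_neqN). Qed.

Lemma o_orbit_rot q : q \in o_orbit ->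
  [/\ rot_o q \in o_orbit, rot_o (rot_o (rot_o q)) = q & q + rot_o q + rot_o (rot_o q) = 0].
Proof.
rewrite !inE -orbA => /or3P [] /eqP ->.
all: rewrite !(rot_o0, rot_oo, rot_oN) eqxx ?orbT; split=> //.
- by rewrite add0r subrr.
- by rewrite subrr add0r.
- by rewrite addr0 addNr.
Qed.

Lemma o_orbitN q : (- q \in o_orbit) = (q \in o_orbit).
Proof.
rewrite !inE oppr_eq0 eqr_opp eqr_oppLR.
by case: (q == 0); case: (q == o); case: (q == - o).
Qed.

Lemma o_orbit_invol q : q \in o_orbit -> q + q = 0 -> q = 0.
Proof.
have No2 : - o + - o != 0 by rewrite -opprD oppr_eq0.
by rewrite !inE -orbA => /or3P [] /eqP -> // /eqP; rewrite ?(negPf oo_neq0) ?(negPf No2).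
Qed.

Definition shifted q u := (u \in Gamma) && (q \in o_orbit).

Definition piQU (x : zprod Q U) : zprod Q U :=
  let: (q, u) := x in
  if u == 0 then (pQ q, 0)
  else if shifted q u then (rot_o q, w u)
  else if q + q == 0 then (N u q, w u)
  else (- q, u).

Arguments piQU : simpl never.

Lemma piQU0 q : piQU (q, 0) = (pQ q, 0).
Proof. by rewrite /piQU eqxx. Qed.

Lemma piQU_shifted q u : u != 0 -> shifted q u -> piQU (q, u) = (rot_o q, w u).
Proof. by rewrite /piQU => /negPf -> ->. Qed.

Lemma piQU_invol q u :
  u != 0 -> ~~ shifted q u -> q + q = 0 -> piQU (q, u) = (N u q, w u).
Proof. by rewrite /piQU => /negPf -> /negPf -> ->; rewrite eqxx. Qed.

Lemma piQU_opp q u : u != 0 -> ~~ shifted q u -> q + q != 0 -> piQU (q, u) = (- q, u).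
Proof. by rewrite /piQU => /negPf -> /negPf -> /negPf ->. Qed.

Lemma shifted_N q u :
  u != 0 -> ~~ shifted q u -> q + q = 0 -> ~~ shifted (N u q) (w u).
Proof.
move=> u0 qs qq; apply: contra qs; rewrite /shifted Gamma_w => /andP [uG NqO].
have Nq0 := o_orbit_invol NqO (N_invol u0 qq).
by rewrite uG -(N3 u0 qq) Nq0 !N0 !inE eqxx.
Qed.

Lemma zprodD q1 q2 u1 u2 : (q1, u1) + (q2, u2) = (q1 + q2, u1 + u2) :> zprod Q U.
Proof. by []. Qed.

Lemma zprod_eq0 q u : ((q, u) == 0 :> zprod Q U) = (q == 0) && (u == 0).
Proof. by []. Qed.

Lemma zero_sum_3cycle_along_w q u q1 q2 : u != 0 ->
  piQU (q, u) = (q1, w u) -> piQU (q1, w u) = (q2, w (w u)) ->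
  piQU (q2, w (w u)) = (q, u) -> q + q1 + q2 = 0 -> zero_sum_3cycle piQU (q, u).
Proof.
move=> u0 e1 e2 e3 sq; rewrite /zero_sum_3cycle e1 e2 e3 eqxx xpair_eqE.
by rewrite (negPf (w2_neq w3 w_fixfree u0)) andbF !zprodD sq w_sum zprod_eq0 !eqxx.
Qed.

Lemma zero_sum_2cycle_opp q u :
  u != 0 -> ~~ shifted q u -> q + q != 0 -> zero_sum_2cycle piQU (q, u).
Proof.
move=> u0 qs qq; have Nqs : ~~ shifted (- q) u by rewrite /shifted o_orbitN.
have Nqq : - q + - q != 0 by rewrite -opprD oppr_eq0.
rewrite /zero_sum_2cycle !piQU_opp // opprK eqxx xpair_eqE eqxx andbT zprodD U_addxx addrN.
rewrite zprod_eq0 !eqxx !andbT.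
by apply: contra qq => /eqP {1}<-; rewrite addNr.
Qed.

Lemma piQU_cycles_zero q :
  (zero_sum_2cycle piQU (q, 0) = zero_sum_2cycle pQ q) *
  (zero_sum_3cycle piQU (q, 0) = zero_sum_3cycle pQ q).
Proof.
rewrite /zero_sum_2cycle /zero_sum_3cycle !piQU0 !zprodD !zprod_eq0 !xpair_eqE.
by rewrite !addr0 !eqxx !andbT.
Qed.

Lemma piQU_cycles : zero_sum_cycles piQU (~: [set 0]).
Proof.
case=> q u; rewrite !inE zprod_eq0.
have [-> | u0] := eqVneq u 0.
  rewrite andbT => q0; have : q \in ~: [set 0] by rewrite !inE.
  move=> /pQ_cycles /andP []; rewrite !inE => pq0 zq.
  by rewrite piQU0 zprod_eq0 eqxx andbT pq0 !piQU_cycles_zero.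
move=> _; have wu0 := w_neq0 u0.
have [qs | qs] := boolP (shifted q u).
  case/andP: (qs) => uG qO; have [rO r3 rsum] := o_orbit_rot qO.
  have [rrO _ _] := o_orbit_rot rO.
  rewrite piQU_shifted // zprod_eq0 (negPf wu0) andbF /=.
  apply/orP; right; apply: (zero_sum_3cycle_along_w u0 (piQU_shifted u0 qs) _ _ rsum).
    by rewrite piQU_shifted // /shifted Gamma_w uG.
  by rewrite piQU_shifted ?w3 ?r3 ?w_neq0 // /shifted !Gamma_w uG.
have [qq | qq] := eqVneq (q + q) 0.
  have Ns := shifted_N u0 qs qq; have Nqq := N_invol u0 qq.
  have NNs := shifted_N wu0 Ns Nqq.
  rewrite piQU_invol // zprod_eq0 (negPf wu0) andbF /=.
  apply/orP; right; apply: (zero_sum_3cycle_along_w u0 (piQU_invol u0 qs qq) _ _ (Nsum u0 qq)).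
    exact: piQU_invol.
  by rewrite piQU_invol ?w3 ?N3 ?w_neq0 //; exact: N_invol.
by rewrite piQU_opp // zprod_eq0 (negPf u0) andbF zero_sum_2cycle_opp.
Qed.

Definition pQ_2cycle_points := [set q in ~: [set 0] | pQ (pQ q) == q].

Lemma piQU_2cycle_points :
  [set x in ~: [set 0] | piQU (piQU x) == x] =
  setX pQ_2cycle_points [set 0]
  :|: setX (order_gt2 Q) (~: [set 0]) :\: setX [set o; - o] Gamma.
Proof.
apply/setP => -[q u]; rewrite !inE zprod_eq0.
have [-> | u0] := eqVneq u 0.
  by rewrite piQU0 piQU0 xpair_eqE /= !eqxx !andbT !andbF orbF.
rewrite /= !andbT !andbF /=.
have [qs | qs] := boolP (shifted q u).
  case/andP: (qs) => uG qO.
  have rs : shifted (rot_o q) (w u) by rewrite /shifted Gamma_w uG; case: (o_orbit_rot qO).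
  rewrite piQU_shifted // piQU_shifted ?w_neq0 // xpair_eqE.
  rewrite (negPf (w2_neq w3 w_fixfree u0)) andbF uG andbT.
  move: qO; rewrite !inE -orbA => /or3P [] /eqP ->; rewrite ?eqxx ?orbT //=.
  by rewrite addr0 eqxx andbF.
have [qq | qq] := eqVneq (q + q) 0.
  rewrite piQU_invol // piQU_invol ?w_neq0 ?shifted_N ?N_invol //.
  by rewrite xpair_eqE (negPf (w2_neq w3 w_fixfree u0)) andbF /= andbF.
have Nqs : ~~ shifted (- q) u by rewrite /shifted o_orbitN.
have Nqq : - q + - q != 0 by rewrite -opprD oppr_eq0.
rewrite piQU_opp // piQU_opp // opprK eqxx /= andbT; apply/esym.
by apply: contra qs => /andP [qo uG]; rewrite /shifted uG !inE -orbA qo orbT.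
Qed.

Lemma card_piQU_2cycle_points :
  #|[set x in ~: [set 0] | piQU (piQU x) == x]| =
  (#|pQ_2cycle_points| + (#|order_gt2 Q| * #|U|.-1 - 2 * #|Gamma|))%N.
Proof.
rewrite piQU_2cycle_points cardsU.
have -> : setX pQ_2cycle_points [set 0]
    :&: (setX (order_gt2 Q) (~: [set 0]) :\: setX [set o; - o] Gamma) = set0.
  by apply/setP => -[q u]; rewrite !inE; case: (u == 0); rewrite ?andbF.
rewrite cards0 subn0 cardsX cards1 muln1 cardsD.
have -> : setX (order_gt2 Q) (~: [set 0]) :&: setX [set o; - o] Gamma =
          setX [set o; - o] Gamma.
  apply/setIidPr/subsetP => -[q u]; rewrite !inE => /andP [qo uG].
  rewrite (_ : u != 0); last by apply: contraNneq Gamma0 => <-.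
  by case/orP: qo => /eqP ->; rewrite andbT ?oo_neq0 // -opprD oppr_eq0.
by rewrite !cardsX cards2 o_neqN (cardsC1 (0 : U)).
Qed.

Lemma zero_sum_partition_zprod a b :
  (#|pQ_2cycle_points| + (#|order_gt2 Q| * #|U|.-1 - 2 * #|Gamma|) = 2 * a)%N ->
  (#|Q| * #|U| = (2 * a + 3 * b).+1)%N ->
  zero_sum_partition (~: [set 0] : {set zprod Q U}) (nseq a 2%N ++ nseq b 3%N).
Proof.
move=> c2 cX; apply: zero_sum_partition_cycles piQU_cycles _ _.
  by rewrite card_piQU_2cycle_points.
by rewrite cardsC1 card_prod cX.
Qed.

End ProductConstruction.

Lemma card_Zmod p : (1 < p)%N -> #|'Z_p| = p.
Proof. by move=> p_gt1; rewrite card_ord Zp_cast. Qed.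

Lemma Z2_addxx (x : 'Z_2) : x + x = 0.
Proof. by case: x => [[|[|?]] ?] //; apply: val_inj. Qed.

Lemma rV_Z2_addxx n (v : 'rV['Z_2]_n) : v + v = 0.
Proof. by apply/matrixP => i j; rewrite !mxE Z2_addxx. Qed.

Definition Z2pair n := zprod 'rV['Z_2]_n 'rV['Z_2]_n.

(* Multiplication by a primitive cube root of unity, reading Z2pair n as F_4^n. *)
Definition omega n (u : Z2pair n) : Z2pair n := (u.2, u.1 + u.2).

Lemma Z2pair_addxx n (u : Z2pair n) : u + u = 0.
Proof. by case: u => a b; rewrite zprodD !rV_Z2_addxx. Qed.

Lemma omegaD n : {morph @omega n : u v / u + v}.
Proof. by case=> [a b] [c d]; rewrite /omega !zprodD /= addrACA. Qed.

Lemma omega3 n (u : Z2pair n) : omega (omega (omega u)) = u.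
Proof.
case: u => a b; rewrite /omega /=; congr (_, _).
  by rewrite addrC -addrA rV_Z2_addxx addr0.
by rewrite addrCA rV_Z2_addxx addr0.
Qed.

Lemma omega_fix n (u : Z2pair n) : omega u = u -> u = 0.
Proof. by case: u => a b [-> /eqP]; rewrite -subr_eq0 addrK => /eqP ->. Qed.

Lemma omega_fixfree n (u : Z2pair n) : u != 0 -> omega u != u.
Proof. by apply: contra => /eqP /omega_fix ->. Qed.

Lemma card_Z2pair n : #|{: Z2pair n}| = (4 ^ n)%N.
Proof. by rewrite card_prod card_mx card_ord mul1n -expnMn. Qed.

Section GmEmbedding.
Variables (k n : nat) (B : finZmodType) (e : B -> 'rV['Z_2]_k).
Hypotheses (eD : {morph e : a b / a + b}) (e_inj : injective e).

Definition Gm_embed (x : zprod (zprod B 'Z_4) (Z2pair n)) : Gm (k + (n + n)) :=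
  (row_mx (e x.1.1) (row_mx x.2.1 x.2.2), x.1.2).

Lemma Gm_embedD : {morph Gm_embed : x y / x + y}.
Proof.
by case=> [[b c] [u1 u2]] [[b' c'] [u1' u2']]; rewrite /Gm_embed /= eD -!add_row_mx.
Qed.

Lemma Gm_embed_inj : injective Gm_embed.
Proof.
by case=> [[b c] [u1 u2]] [[b' c'] [u1' u2']] [/eq_row_mx [/e_inj -> /eq_row_mx [-> ->]] ->].
Qed.

Lemma zero_sum_partition_Gm_embed M : #|B| = (2 ^ k)%N ->
  zero_sum_partition (~: [set 0] : {set zprod (zprod B 'Z_4) (Z2pair n)}) M ->
  zero_sum_partition (~: [set 0] : {set Gm (k + (n + n))}) M.
Proof.
move=> cB; apply: zero_sum_partition_iso Gm_embedD Gm_embed_inj _.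
by rewrite !card_prod cB !card_mx !card_Zmod // !mul1n !expnD mulnAC.
Qed.

End GmEmbedding.

Definition Q1 := zprod 'Z_2 'Z_4.
Definition mkQ1 (a b : nat) : Q1 := (inZp a, inZp b).

Definition pQ1 (q : Q1) : Q1 :=
  match val q.1, val q.2 with
  | 0, 1 => mkQ1 0 3 | 0, 3 => mkQ1 0 1 | 1, 1 => mkQ1 1 3 | 1, 3 => mkQ1 1 1
  | 1, 0 => mkQ1 0 2 | 0, 2 => mkQ1 1 2 | 1, 2 => mkQ1 1 0
  | _, _ => q
  end%N.

Ltac case_Q1 := case=> [[[|[|?]] ?] [[|[|[|[|?]]]] ?]] //.

Lemma pQ1_cycles : zero_sum_cycles pQ1 (~: [set 0]).
Proof. by move=> q; rewrite !inE; move: q; case_Q1. Qed.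

Lemma pQ1_involutions q : q + q == 0 ->
  [&& pQ1 q + pQ1 q == 0, pQ1 (pQ1 (pQ1 q)) == q & q + pQ1 q + pQ1 (pQ1 q) == 0].
Proof. by move: q; case_Q1. Qed.

Lemma card_pQ1_2cycle_points : #|pQ_2cycle_points pQ1| = 4%N.
Proof.
have -> : pQ_2cycle_points pQ1 = mkQ1 0 1 |: (mkQ1 0 3 |: (mkQ1 1 1 |: [set mkQ1 1 3])).
  by apply/setP => q; rewrite !inE; move: q; case_Q1.
by rewrite !cardsU1 cards1 !inE.
Qed.

Lemma card_order_gt2_Q1 : #|order_gt2 Q1| = 4%N.
Proof.
have -> : order_gt2 Q1 = mkQ1 0 1 |: (mkQ1 0 3 |: (mkQ1 1 1 |: [set mkQ1 1 3])).
  by apply/setP => q; rewrite !inE; move: q; case_Q1.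
by rewrite !cardsU1 cards1 !inE.
Qed.

Definition Q3 := zprod (zprod 'Z_2 'Z_2) 'Z_4.
Definition mkQ3 (a b c : nat) : Q3 := ((inZp a, inZp b), inZp c).

Definition pQ3 (q : Q3) : Q3 :=
  match val q.1.1, val q.1.2, val q.2 with
  | 1, 0, 0 => mkQ3 0 0 2 | 0, 0, 2 => mkQ3 1 0 2 | 1, 0, 2 => mkQ3 1 0 0
  | 0, 0, 1 => mkQ3 0 1 1 | 0, 1, 1 => mkQ3 0 1 2 | 0, 1, 2 => mkQ3 0 0 1
  | 1, 0, 3 => mkQ3 0 1 3 | 0, 1, 3 => mkQ3 1 1 2 | 1, 1, 2 => mkQ3 1 0 3
  | 1, 0, 1 => mkQ3 1 1 3 | 1, 1, 3 => mkQ3 0 1 0 | 0, 1, 0 => mkQ3 1 0 1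
  | 1, 1, 1 => mkQ3 0 0 3 | 0, 0, 3 => mkQ3 1 1 0 | 1, 1, 0 => mkQ3 1 1 1
  | _, _, _ => q
  end%N.

(* On the involutions of Q3, an F_2^3 with coordinates (x1, x2, x0), twist 0
   is a linear map A with A^3 + A + 1 = 0, twist 1 = A^-1 + 1 and
   twist 2 = (1 + A)^-1; hence twist (i + 2) \o twist (i + 1) \o twist i = 1 and
   1 + twist i + twist (i + 1) \o twist i = 0.  No single map can do this, as
   the 7 nonzero involutions do not split into zero-sum triples. *)
Definition twist (i : 'I_3) (q : Q3) : Q3 :=
  let x1 := val q.1.1 in let x2 := val q.1.2 in let x0 := (val q.2)./2 in
  match val i with
  | 0 => mkQ3 (x0 + x2) x1 (2 * x2)
  | 1 => mkQ3 (x1 + x2) (x0 + x2) (2 * x1)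
  | _ => mkQ3 (x0 + x1) (x0 + x1 + x2) (2 * (x1 + x2))
  end%N.

Ltac case_Q3 := case=> [[[[|[|?]] ?] [[|[|?]] ?]] [[|[|[|[|?]]]] ?]] //.

Lemma pQ3_cycles : zero_sum_cycles pQ3 (~: [set 0]).
Proof. by move=> q; rewrite !inE; move: q; case_Q3. Qed.

Lemma twist0 i : twist i 0 = 0.
Proof. by apply/eqP; case: i => [[|[|[|?]]] ?]. Qed.

Lemma twist_involutions i q : q + q == 0 ->
  [&& twist i q + twist i q == 0, twist (i + 1 + 1) (twist (i + 1) (twist i q)) == q
    & q + twist i q + twist (i + 1) (twist i q) == 0].
Proof. by case: i => [[|[|[|?]]] ?] //; move: q; case_Q3. Qed.

Lemma card_pQ3_2cycle_points : #|pQ_2cycle_points pQ3| = 0%N.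
Proof.
by apply/eqP; rewrite cards_eq0; apply/eqP/setP => q; rewrite !inE; move: q; case_Q3.
Qed.

Lemma card_order_gt2_Q3 : #|order_gt2 Q3| = 8%N.
Proof.
have -> : order_gt2 Q3 = mkQ3 0 0 1 |: (mkQ3 0 0 3 |: (mkQ3 1 0 1 |: (mkQ3 1 0 3 |:
    (mkQ3 0 1 1 |: (mkQ3 0 1 3 |: (mkQ3 1 1 1 |: [set mkQ3 1 1 3])))))).
  by apply/setP => q; rewrite !inE; move: q; case_Q3.
by rewrite !cardsU1 cards1 !inE.
Qed.

Lemma pow4_mod3 n : (4 ^ n %% 3 = 1)%N.
Proof. by rewrite -modnXm /= exp1n. Qed.

Lemma exp2_double n : (2 ^ (n + n) = 4 ^ n)%N.
Proof. by rewrite addnn -mul2n expnM. Qed.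

Lemma Gm_add (m : nat) v1 v2 k1 k2 : (v1, k1) + (v2, k2) = (v1 + v2, k1 + k2) :> Gm m.
Proof. by []. Qed.

Lemma invols_Gm m : invols (Gm m) = setX [set: 'rV['Z_2]_m] [set 0; 2] :\ (0 : Gm m).
Proof.
apply/setP => -[v k]; rewrite !inE Gm_add rV_Z2_addxx.
rewrite (_ : 0 = (0, 0) :> Gm m) // !xpair_eqE eqxx /=.
by case: k => [[|[|[|[|?]]]] ?] //; rewrite ?andbF ?andbT.
Qed.

Lemma card_invols m : #|invols (Gm m)| = (2 ^ m * 2 - 1)%N.
Proof.
rewrite invols_Gm; set A := setX _ _; have := cardsD1 (0 : Gm m) A.
rewrite !inE eqxx /= cardsX cardsT card_mx mul1n cards2 card_Zmod //=.
by move=> ->; rewrite addKn.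
Qed.

Lemma fG_Gm m : fG (Gm m) = (2 ^ m)%N.
Proof.
rewrite /fG card_invols card_prod card_mx !card_Zmod // mul1n.
have := expn_gt0 2 m; move: (2 ^ m)%N => x x_gt0.
by rewrite (_ : x * 4 - (x * 2 - 1) - 1 = 2 * x)%N ?mulKn //; lia.
Qed.

Lemma Gm_odd_partition n t : (t %% 3 = 0)%N -> (t < 4 ^ n)%N ->
  let m := (1 + (n + n))%N in
  zero_sum_partition (~: [set 0] : {set Gm m})
    (nseq (fG (Gm m) - t) 2 ++ nseq ((#|invols (Gm m)| + 2 * t) %/ 3) 3)%N.
Proof.
move=> t_mod t_lt m; rewrite fG_Gm card_invols /m expnD exp2_double.
have lt_s : (3 * (t %/ 3) < #|{: Z2pair n}|)%N by rewrite card_Z2pair; lia.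
have [Gamma [Gamma0 Gamma_w cGamma]] :=
  exists_stable_set (@omega3 n) (morphD_0 (@omegaD n)) (@omega_fixfree n) lt_s.
apply: (zero_sum_partition_Gm_embed (e := const_mx)).
- by move=> a b; apply/matrixP => i j; rewrite !mxE.
- by move=> a b /matrixP /(_ 0 0); rewrite !mxE.
- by rewrite card_Zmod.
apply: (zero_sum_partition_zprod (@Z2pair_addxx n) (@omegaD n) (@omega3 n) (@omega_fix n)
          Gamma0 Gamma_w (N := fun _ => pQ1) _ _ _ _ (o := mkQ1 0 1) _ pQ1_cycles).
- by [].
- by move=> _ q _ /eqP /pQ1_involutions /and3P [/eqP].
- by move=> _ q _ /eqP /pQ1_involutions /and3P [_ /eqP].
- by move=> _ q _ /eqP /pQ1_involutions /and3P [_ _ /eqP].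
- by [].
- rewrite card_pQ1_2cycle_points card_order_gt2_Q1 card_Z2pair cGamma expn1.
  have := pow4_mod3 n; lia.
- rewrite card_prod !card_Zmod // card_Z2pair expn1.
  have := pow4_mod3 n; lia.
Qed.

Definition pair_row (b : zprod 'Z_2 'Z_2) : 'rV['Z_2]_2 :=
  \row_j (if j == 0 then b.1 else b.2).

Lemma pair_rowD : {morph pair_row : a b / a + b}.
Proof. by move=> a b; apply/matrixP => i j; rewrite !mxE; case: ifP. Qed.

Lemma pair_row_inj : injective pair_row.
Proof.
move=> [a1 a2] [b1 b2] /matrixP eab.
by have := eab 0 0; have := eab 0 1; rewrite !mxE /= => -> ->.
Qed.

Lemma Gm_even_partition n t : (t %% 3 = 1)%N -> (4 <= t)%N -> (t < 4 ^ n + 4)%N ->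
  let m := (2 + (n + n))%N in
  zero_sum_partition (~: [set 0] : {set Gm m})
    (nseq (fG (Gm m) - t) 2 ++ nseq ((#|invols (Gm m)| + 2 * t) %/ 3) 3)%N.
Proof.
move=> t_mod t_ge4 t_lt m; rewrite fG_Gm card_invols /m expnD exp2_double.
have omega0 := morphD_0 (@omegaD n).
have lt_s : (3 * ((t - 4) %/ 3) < #|{: Z2pair n}|)%N by rewrite card_Z2pair; lia.
have [Gamma [Gamma0 Gamma_w cGamma]] :=
  exists_stable_set (@omega3 n) omega0 (@omega_fixfree n) lt_s.
have [c cw] := exists_orbit_labelling (@omega3 n) omega0 (@omega_fixfree n).
have cww u : u != 0 -> c (omega (omega u)) = c u + 1 + 1.
  by move=> u0; rewrite !cw // (w_neq_z (@omega3 n) omega0 u0).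
apply: (zero_sum_partition_Gm_embed pair_rowD pair_row_inj).
  by rewrite card_prod !card_Zmod.
apply: (zero_sum_partition_zprod (@Z2pair_addxx n) (@omegaD n) (@omega3 n) (@omega_fix n)
          Gamma0 Gamma_w (N := fun u => twist (c u)) _ _ _ _ (o := mkQ3 0 0 1) _ pQ3_cycles).
- by move=> u; rewrite twist0.
- by move=> u q _ /eqP /(twist_involutions (c u)) /and3P [/eqP].
- by move=> u q u0 /eqP /(twist_involutions (c u)) /and3P [_ /eqP]; rewrite cww // cw.
- by move=> u q u0 /eqP /(twist_involutions (c u)) /and3P [_ _ /eqP]; rewrite cw.
- by [].
- rewrite card_pQ3_2cycle_points card_order_gt2_Q3 card_Z2pair cGamma.
  have := pow4_mod3 n; lia.
- rewrite card_Z2pair !card_prod !card_Zmod //.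
  have := pow4_mod3 n; lia.
Qed.

Lemma odd_or_even_split m :
  (0 < m)%N -> exists n, m = (1 + (n + n))%N \/ m = (2 + (n + n))%N.
Proof.
move=> m_gt0; exists m.-1./2; have := odd_double_half m.-1; rewrite -addnn.
by case: (odd _) => /= e; [right | left]; lia.
Qed.

Local Close Scope ring_scope.

Theorem lemma6p33 :
  exists m0 : nat, forall m : nat, (m0 <= m)%N ->
    forall t : nat,
      (3 <= t)%N -> (1000 * t <= fG (Gm m))%N ->
      ((#|invols (Gm m)| + 2 * t) %% 3 = 0)%N ->
      zero_sum_partition (~: [set (0 : Gm m)%R])
        (nseq (fG (Gm m) - t) 2%N ++ nseq ((#|invols (Gm m)| + 2 * t) %/ 3) 3%N).
Proof.
exists 1 => m m_gt0 t t_ge3 t_le t_mod.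
have [n [mE | mE]] := odd_or_even_split m_gt0; subst m;
  rewrite fG_Gm card_invols expnD exp2_double in t_le t_mod; have := pow4_mod3 n.
- by move=> pow4; apply: Gm_odd_partition; lia.
- by move=> pow4; apply: Gm_even_partition; lia.
Qed.
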